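(* Let $\mathfrak g$ be a finite-dimensional complex Lie algebra, $U\subset\mathfrak g^*\times\mathfrak g^*$ open, and $\lambda_1,\lambda_2:U\to\mathbb C$ locally analytic functions such that for every $(x,a)\in U$, $\lambda_1(x,a)$ and $\lambda_2(x,a)$ are distinct eigenvalues of the pencil $\mathcal A_x+\mu\mathcal A_a$. Then for $(x_0,a_0)$ in an open dense subset of $U$, $\frac{\partial\lambda_1}{\partial x}(x_0,a_0)\wedge\frac{\partial\lambda_2}{\partial x}(x_0,a_0)\neq0$.
   Context: For $x\in\mathfrak g^*$, $\mathcal A_x$ is the skew form $(\xi,\eta)\mapsto\langle x,[\xi,\eta]\rangle$ on $\mathfrak g$. A number $\lambda_0$ is an eigenvalue of the pencil $\mathcal A_x+\mu\mathcal A_a$ if $\operatorname{rk}(\mathcal A_x-\lambda_0\mathcal A_a)<\max_\mu\operatorname{rk}(\mathcal A_x+\mu\mathcal A_a)$. $\frac{\partial\lambda}{\partial x}$ denotes the differential with respect to $x\in\mathfrak g^*$ (an element of $\mathfrak g$). *)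

From HB Require Import structures.
From mathcomp Require Import all_boot all_order all_algebra.
From mathcomp Require Import complex.
From mathcomp Require Import all_classical all_reals all_analysis.
Set Implicit Arguments.
Unset Strict Implicit.
Unset Printing Implicit Defensive.
Import Order.TTheory GRing.Theory Num.Theory.
Import numFieldNormedType.Exports.
Local Open Scope ring_scope.
Local Open Scope classical_set_scope.

(* The field of complex numbers, built over a real field R (any realType is
   a model of the reals). *)
Definition cplx (R : realType) : numFieldType := R[i].

(* A Lie algebra g of dimension n is given on the basis e_0..e_{n-1} of
   'rV_n by structure constants c i j k: [e_i, e_j] = sum_k c i j k e_k. *)
Definition is_lie_structure (K : numFieldType) (n : nat)
  (c : 'I_n -> 'I_n -> 'I_n -> K) : Prop :=
  (forall i j k, c i j k = - c j i k) /\
  (forall i j k m,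
     \sum_(l < n) (c i j l * c l k m + c j k l * c l i m + c k i l * c l j m)
     = 0).

Definition lie_bracket (K : numFieldType) (n : nat)
  (c : 'I_n -> 'I_n -> 'I_n -> K) (u v : 'rV[K]_n) : 'rV[K]_n :=
  \row_k \sum_(i < n) \sum_(j < n) u 0 i * v 0 j * c i j k.

(* g^* is identified with 'rV_n through the dual basis: <x, xi> *)
Definition dual_pairing (K : numFieldType) (n : nat) (x xi : 'rV[K]_n) : K :=
  \sum_(k < n) x 0 k * xi 0 k.

(* Gram matrix of the skew form A_x (xi, eta) = <x, [xi, eta]> *)
Definition formA (K : numFieldType) (n : nat)
  (c : 'I_n -> 'I_n -> 'I_n -> K) (x : 'rV[K]_n) : 'M[K]_n :=
  \matrix_(i, j) dual_pairing x (lie_bracket c (delta_mx 0 i) (delta_mx 0 j)).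

(* l0 is an eigenvalue of the pencil A_x + mu A_a :
   rk (A_x - l0 A_a) < max_mu rk (A_x + mu A_a) *)
Definition pencil_eigenvalue (K : numFieldType) (n : nat)
  (c : 'I_n -> 'I_n -> 'I_n -> K) (x a : 'rV[K]_n) (l0 : K) : Prop :=
  exists mu : K,
    (\rank (formA c x - l0 *: formA c a)%R < \rank (formA c x + mu *: formA c a)%R)%N.

Definition pcoord (K : numFieldType) (n : nat) (p : 'rV[K]_n * 'rV[K]_n)
  (i : 'I_n + 'I_n) : K :=
  match i with inl k => p.1 0 k | inr k => p.2 0 k end.

(* a homogeneous polynomial of degree k in the 2n coordinates, given by
   coefficients on k-tuples of coordinate indices *)
Definition monom (K : numFieldType) (n k : nat) (t : k.-tuple ('I_n + 'I_n))
  (h : 'rV[K]_n * 'rV[K]_n) : K :=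
  \prod_(j < k) pcoord h (tnth t j).

Definition analytic_at (K : numFieldType) (n : nat)
  (F : 'rV[K]_n * 'rV[K]_n -> K) (p : 'rV[K]_n * 'rV[K]_n) : Prop :=
  exists r : K, 0 < r /\
  exists cf : forall k : nat, k.-tuple ('I_n + 'I_n) -> K,
  forall h : 'rV[K]_n * 'rV[K]_n,
    (forall i, `|pcoord h i| < r) ->
    (exists M : K, forall N : nat,
        \sum_(k < N) \sum_(t : k.-tuple ('I_n + 'I_n))
            `|cf k t| * `|monom t h| <= M) /\
    ((fun N : nat => \sum_(k < N) \sum_(t : k.-tuple ('I_n + 'I_n))
            cf k t * monom t h) @ \oo
        --> F (p.1 + h.1, p.2 + h.2)).

Definition locally_analytic (K : numFieldType) (n : nat)
  (U : set ('rV[K]_n * 'rV[K]_n)) (F : 'rV[K]_n * 'rV[K]_n -> K) : Prop :=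
  forall p, U p -> analytic_at F p.

(* d lambda / d x at p = (x, a): the differential of x |-> F (x, a) at x,
   a linear form on g^*, i.e. an element of g (coordinates in the basis e_k) *)
Definition dx (R : realType) (n : nat)
  (F : 'rV[cplx R]_n * 'rV[cplx R]_n -> cplx R)
  (p : 'rV[cplx R]_n * 'rV[cplx R]_n) : 'rV[cplx R]_n :=
  let x0 : 'rV[cplx R]_n := p.1 in
  let a0 : 'rV[cplx R]_n := p.2 in
  \row_k ('d (fun x : 'rV[cplx R]_n => F (x, a0)) x0 (delta_mx 0 k)).

(* u /\ v in Lambda^2 g, by its coordinates on the basis e_i /\ e_j
   (as an antisymmetric matrix) *)
Definition wedge2 (K : numFieldType) (n : nat) (u v : 'rV[K]_n) : 'M[K]_n :=
  \matrix_(i, j) (u 0 i * v 0 j - u 0 j * v 0 i).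

From HB Require Import structures.
From mathcomp Require Import all_boot all_order all_algebra.
From mathcomp Require Import complex.
From mathcomp Require Import all_classical all_reals all_analysis.
From mathcomp Require Import ring.
Import Order.TTheory GRing.Theory Num.Theory.
Import numFieldNormedType.Exports.
Local Open Scope ring_scope.
Local Open Scope classical_set_scope.

(* Let l be an analytic branch of eigenvalues of the pencil A_x + mu A_a.
   For fixed (x, a) the eigenvalues are roots of a nonzero polynomial (a
   maximal minor of A_x - l A_a), hence isolated, while the eigenvalues at
   (x + s a, a) and (t x, a) are those at (x, a) shifted by s and scaled by t.
   Continuity and isolation force l (x + s a, a) = l (x, a) + s and
   l ((1 + s) x, a) = (1 + s) l (x, a) for small s, so dl/dx takes the value 1
   on a and l (x, a) on x.  Pairing dl1/dx /\ dl2/dx with a /\ x therefore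
   gives l2 (x, a) - l1 (x, a) <> 0 at every point of U, and U itself is the
   required open dense set. *)

Lemma mxrank_mxsub {F : fieldType} {m n m' n'} (f : 'I_m' -> 'I_m) (g : 'I_n' -> 'I_n)
    (A : 'M[F]_(m, n)) :
  (\rank (mxsub f g A) <= \rank A)%N.
Proof.
have -> : mxsub f g A = rowsub f 1%:M *m (A *m colsub g 1%:M).
  by rewrite mulmx_colsub mulmx1 -rowsubE; apply/matrixP => i j; rewrite !mxE.
exact: leq_trans (mxrankM_maxr _ _) (mxrankM_maxl _ _).
Qed.

Lemma exists_minor_det_neq0 {F : fieldType} {m n} (A : 'M[F]_(m, n)) :
  exists f : 'I_(\rank A) -> 'I_m, exists g : 'I_(\rank A) -> 'I_n,
    \det (mxsub f g A) != 0.
Proof.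
have fullT : row_full (rowsub (maxrankfun A) A)^T.
  by rewrite /row_full mxrank_tr; exact: maxrowsub_free.
exists (maxrankfun A), (fullrankfun fullT).
have := fullrowsub_unit fullT.
have -> : rowsub (fullrankfun fullT) (rowsub (maxrankfun A) A)^T
          = (mxsub (maxrankfun A) (fullrankfun fullT) A)^T.
  by apply/matrixP => i j; rewrite !mxE.
by rewrite unitmxE det_tr unitfE.
Qed.

(* P is a nonvanishing maximal minor of A - l0 B, with l0 of maximal rank,
   read as a polynomial in l0: off its roots, A - l B again has maximal rank. *)
Lemma pencil_rank_drop_root {F : fieldType} {n} (A B : 'M[F]_n) :
  exists2 P : {poly F}, P != 0 &
    forall l mu, (\rank (A - l *: B)%R < \rank (A + mu *: B)%R)%N -> root P l.
Proof.
pose rk l := \rank (A - l *: B)%R.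
have [l0 rk_max] : exists l0, forall l, (rk l <= rk l0)%N.
  have rk_ex : exists k, `[< exists l, rk l = k >].
    by exists (rk 0); apply/asboolP; exists 0.
  have rk_ub k : `[< exists l, rk l = k >] -> (k <= n)%N.
    by move=> /asboolP[l <-]; exact: rank_leq_row.
  case: (ex_maxnP rk_ex rk_ub) => k /asboolP[l0 <-] rk_le.
  by exists l0 => l; apply: rk_le; apply/asboolP; exists l.
have [f [g minor_neq0]] := exists_minor_det_neq0 (A - l0 *: B).
pose M := \matrix_(i, j) ((mxsub f g A i j)%:P - 'X * (mxsub f g B i j)%:P).
have minor_horner l : (\det M).[l] = \det (mxsub f g (A - l *: B)).
  rewrite -horner_evalE -det_map_mx; congr (\det _); apply/matrixP => i j.
  by rewrite !mxE /= horner_evalE !hornerE mulrC.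
exists (\det M).
  by apply: contra_neq minor_neq0 => M0; rewrite -minor_horner M0 horner0.
move=> l mu rk_lt; apply: contraLR rk_lt => /negbTE Pl_neq0; rewrite -leqNgt.
have : (\rank (A - l0 *: B)%R <= rk l)%N.
  have := mxrank_mxsub f g (A - l *: B).
  suff /eqP -> : row_free (mxsub f g (A - l *: B)) by [].
  by rewrite row_free_unit unitmxE unitfE -minor_horner -/(root _ l) Pl_neq0.
by apply: leq_trans; have := rk_max (- mu); rewrite /rk scaleNr opprK.
Qed.

Lemma cvg_horner {K : numFieldType} (p : {poly K}) (z : K) :
  p.[x] @[x --> z] --> p.[z].
Proof.
elim/poly_ind: p => [|p a IHp].
  rewrite horner0 (_ : horner 0 = cst 0); first exact: (@cvg_cst _ _ _ (nbhs z)).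
  by apply/funext => x; rewrite horner0.
rewrite hornerMXaddC (_ : horner _ = fun x => p.[x] * x + a).
  exact: cvgD (cvgM IHp cvg_id) (cvg_cst _).
by apply/funext => x; rewrite hornerMXaddC.
Qed.

Lemma root_isolated {K : numFieldType} (P : {poly K}) (z0 : K) :
  P != 0 -> \forall z \near z0, root P z -> z = z0.
Proof.
move=> P_neq0; have [m [q q_z0 ->]] := multiplicity_XsubC P z0.
rewrite P_neq0 /= /root in q_z0.
have q_near : \forall z \near z0, q.[z] != 0.
  have q_pos : 0 < `|q.[z0]| by rewrite normr_gt0.
  near=> z; have : `|q.[z0] - q.[z]| < `|q.[z0]|.
    by near: z; exact: cvgr_dist_lt _ _ (cvg_horner q z0) _ q_pos.
  by apply: contraTneq => ->; rewrite subr0 ltxx.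
apply: filterS q_near => z qz_neq0.
rewrite /root hornerM horner_exp hornerXsubC mulf_eq0 (negbTE qz_neq0) /=.
by rewrite expf_eq0 subr_eq0 => /andP[_ /eqP].
Unshelve. all: by end_near.
Qed.

Lemma pencil_eigenvalue_isolated {K : numFieldType} {n}
    (c : 'I_n -> 'I_n -> 'I_n -> K) (x a : 'rV[K]_n) (l0 : K) :
  \forall l \near l0, pencil_eigenvalue c x a l -> l = l0.
Proof.
have [P P_neq0 P_root] := pencil_rank_drop_root (formA c x) (formA c a).
apply: filterS (root_isolated P l0 P_neq0) => l eq_l [mu /P_root].
exact: eq_l.
Qed.

Lemma formAD {K : numFieldType} {n} (c : 'I_n -> 'I_n -> 'I_n -> K) x y :
  formA c (x + y) = formA c x + formA c y.
Proof.
apply/matrixP => i j; rewrite !mxE /dual_pairing -big_split /=.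
by apply: eq_bigr => k _; rewrite mxE mulrDl.
Qed.

Lemma formAZ {K : numFieldType} {n} (c : 'I_n -> 'I_n -> 'I_n -> K) t x :
  formA c (t *: x) = t *: formA c x.
Proof.
apply/matrixP => i j; rewrite !mxE /dual_pairing mulr_sumr.
by apply: eq_bigr => k _; rewrite mxE mulrA.
Qed.

Lemma pencil_eigenvalue_shift {K : numFieldType} {n}
    (c : 'I_n -> 'I_n -> 'I_n -> K) x a s l :
  pencil_eigenvalue c (x + s *: a) a l -> pencil_eigenvalue c x a (l - s).
Proof.
move=> [mu rank_lt]; exists (s + mu); move: rank_lt; rewrite formAD formAZ.
by rewrite scalerBl opprB addrA scalerDl addrA.
Qed.

Lemma pencil_eigenvalue_scale {K : numFieldType} {n}
    (c : 'I_n -> 'I_n -> 'I_n -> K) x a t l :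
  t != 0 -> pencil_eigenvalue c (t *: x) a l -> pencil_eigenvalue c x a (l / t).
Proof.
move=> t_neq0 [mu rank_lt]; exists (mu / t); move: rank_lt.
have factor_t b : t *: formA c x + b *: formA c a
                  = t *: (formA c x + b / t *: formA c a).
  by rewrite scalerDr scalerA mulrCA mulfV // mulr1.
by rewrite formAZ -!scaleNr !factor_t !eqmx_scale // mulNr.
Qed.

Lemma norm_mx_coord_le {K : numFieldType} {m n} (x : 'M[K]_(m, n)) i j :
  `|x i j| <= `|x|.
Proof.
change (`|x i j| <= mx_norm x); rewrite mx_normE -[leLHS]nngE num_le.
exact: (le_bigmax _ _ (i, j)).
Qed.

Lemma norm_pcoord_slice_le {K : numFieldType} {n} (y : 'rV[K]_n) i :
  `|pcoord (y, 0) i| <= `|y|.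
Proof. by case: i => k /=; rewrite ?mxE ?normr0 ?normr_ge0 ?norm_mx_coord_le. Qed.

Lemma norm_monom_le {K : numFieldType} {n k} (t : k.-tuple ('I_n + 'I_n))
    (h : 'rV[K]_n * 'rV[K]_n) s :
  (forall i, `|pcoord h i| <= s) -> `|monom t h| <= s ^+ k.
Proof.
move=> h_le; rewrite /monom normr_prod -[k in s ^+ k]card_ord -prodr_const.
by apply: ler_prod => j _; rewrite normr_ge0 h_le.
Qed.

Definition homog_term {K : numFieldType} {n k}
    (w : k.-tuple ('I_n + 'I_n) -> K) (h : 'rV[K]_n * 'rV[K]_n) : K :=
  \sum_(t : k.-tuple ('I_n + 'I_n)) w t * monom t h.

Definition slice_linear {K : numFieldType} {n} (w : 1.-tuple ('I_n + 'I_n) -> K)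
    (y : 'rV[K]_n) : K :=
  homog_term w (y, 0).

Lemma slice_linear_is_linear {K : numFieldType} {n}
    (w : 1.-tuple ('I_n + 'I_n) -> K) :
  linear_for *:%R (slice_linear w).
Proof.
move=> a y z; rewrite /slice_linear /homog_term scaler_sumr -big_split /=.
apply: eq_bigr => t _; rewrite /monom !big_ord1 -[a *: (_ * _)]/(a * _) mulrCA -mulrDr.
congr (_ * _).
by case: (tnth t ord0) => k /=; rewrite !mxE // mulr0 addr0.
Qed.

HB.instance Definition _ {K : numFieldType} {n} (w : 1.-tuple ('I_n + 'I_n) -> K) :=
  GRing.isLinear.Build K 'rV[K]_n K *:%R (slice_linear w)
    (slice_linear_is_linear w).

Lemma norm_slice_linear_le {K : numFieldType} {n}
    (w : 1.-tuple ('I_n + 'I_n) -> K) y :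
  `|slice_linear w y| <= (\sum_t `|w t|) * `|y|.
Proof.
rewrite mulr_suml; apply: le_trans (ler_norm_sum _ _ _) _.
apply: ler_sum => t _; rewrite normrM ler_wpM2l // -[`|y|]expr1.
exact/norm_monom_le/norm_pcoord_slice_le.
Qed.

Lemma differentiable_quadratic_remainder {K : numFieldType}
    {V : normedModType K} (f : V -> K) x (L : {linear V -> K}) (C d : K) :
  0 < d -> 0 <= C -> (forall h, `|L h| <= C * `|h|) ->
  (forall h, `|h| < d -> `|f (h + x) - f x - L h| <= C * `|h| ^+ 2) ->
  differentiable f x.
Proof.
move=> d_gt0 C_ge0 L_le rem_le.
have L_cont : continuous L.
  apply/linear_bounded_continuous/bounded_funP => s.
  by exists (C * s) => y y_le; apply: le_trans (L_le y) _; exact: ler_wpM2l.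
have f_expansion : f \o shift x = cst (f x) + L +o_ 0 id.
  apply/eqaddoP => eps eps_gt0.
  have C1_gt0 : 0 < C + 1 by rewrite ltr_wpDl.
  near=> h.
  have h_lt_d : `|h| < d by near: h; exact: nbhs0_lt.
  have h_lt_eps : `|h| < eps / (C + 1).
    by near: h; apply: nbhs0_lt; rewrite divr_gt0.
  rewrite /= opprD addrA; apply: le_trans (rem_le h h_lt_d) _.
  apply: (@le_trans _ _ ((C + 1) * `|h| ^+ 2)).
    by rewrite ler_wpM2r ?exprn_ge0 // lerDl.
  by rewrite expr2 mulrA ler_wpM2r // mulrC -ler_pdivlMr // ltW.
by apply/diff_locallyP; rewrite (diff_unique L_cont f_expansion).
Unshelve. all: by end_near.
Qed.

Lemma cvg_normr_le {K : numFieldType} {T} {F : set_system T} {FF : ProperFilter F}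
    (u : T -> K) l B :
  u @ F --> l -> 0 <= B -> (\forall t \near F, `|u t| <= B) -> `|l| <= B.
Proof.
move=> u_l B_ge0 u_le; rewrite real_leNgt ?ger0_real ?normr_real //.
apply/negP => B_lt; have eps_gt0 : 0 < `|l| - B by rewrite subr_gt0.
near F => t.
have := ler_normD (l - u t) (u t); rewrite subrK => l_le.
have : `|l - u t| + `|u t| < `|l| - B + B.
  apply: ltr_leD; last by near: t.
  by near: t; exact: cvgr_dist_lt _ _ u_l _ eps_gt0.
by rewrite subrK => /(le_lt_trans l_le); rewrite ltxx.
Unshelve. all: by end_near.
Qed.

Section AnalyticSlice.
Variables (K : numFieldType) (n : nat) (F : 'rV[K]_n * 'rV[K]_n -> K).
Variables (x0 a0 : 'rV[K]_n) (r : K).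
Variable cf : forall k : nat, k.-tuple ('I_n + 'I_n) -> K.
Hypothesis r_gt0 : 0 < r.
Hypothesis F_series : forall h : 'rV[K]_n * 'rV[K]_n,
  (forall i, `|pcoord h i| < r) ->
  (exists M : K, forall N : nat,
     \sum_(k < N) \sum_(t : k.-tuple ('I_n + 'I_n)) `|cf k t| * `|monom t h| <= M) /\
  ((fun N : nat => \sum_(k < N) homog_term (cf k) h) @ \oo
     --> F (x0 + h.1, a0 + h.2)).

Let rho := r / 2.

Let rho_gt0 : 0 < rho. Proof. by rewrite divr_gt0. Qed.

Let rho_lt_r : rho < r. Proof. by rewrite ltr_pdivrMr // ltr_pMr // ltr1n. Qed.

Lemma series_abs_bounded : exists2 M, 0 <= M &
  forall N, \sum_(k < N) \sum_(t : k.-tuple ('I_n + 'I_n)) `|cf k t| * rho ^+ k <= M.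
Proof.
pose hs : 'rV[K]_n * 'rV[K]_n := (const_mx rho, const_mx rho).
have pcoord_hs i : `|pcoord hs i| = rho by case: i => k /=; rewrite mxE gtr0_norm.
have monom_hs k (t : k.-tuple ('I_n + 'I_n)) : `|monom t hs| = rho ^+ k.
  rewrite /monom normr_prod -[k in rho ^+ k]card_ord -prodr_const.
  by apply: eq_bigr => j _; rewrite pcoord_hs.
have hs_lt i : `|pcoord hs i| < r by rewrite pcoord_hs.
have [[M M_bound] _] := F_series hs hs_lt.
exists M; first by have := M_bound 0%N; rewrite big_ord0.
move=> N; apply: le_trans (M_bound N); apply: ler_sum => k _; apply: ler_sum => t _.
by rewrite monom_hs.
Qed.

Lemma series_tail_le {M} {y : 'rV[K]_n} {N} :
  (forall N, \sum_(k < N) \sum_(t : k.-tuple ('I_n + 'I_n)) `|cf k t| * rho ^+ k <= M) ->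
  0 <= M -> `|y| <= rho -> (2 <= N)%N ->
  `|\sum_(2 <= k < N) homog_term (cf k) (y, 0)| <= M / rho ^+ 2 * `|y| ^+ 2.
Proof.
move=> M_bound M_ge0 y_le N_ge2.
have ratio_ge0 : 0 <= `|y| ^+ 2 / rho ^+ 2 by rewrite divr_ge0 ?exprn_ge0 // ltW.
have tail_le : \sum_(2 <= k < N) `|homog_term (cf k) (y, 0)| <= `|y| ^+ 2 / rho ^+ 2 *
    \sum_(2 <= k < N) \sum_(t : k.-tuple ('I_n + 'I_n)) `|cf k t| * rho ^+ k.
  rewrite mulr_sumr; apply: ler_sum_nat => k /andP[k_ge2 _].
  rewrite mulr_sumr; apply: le_trans (ler_norm_sum _ _ _) _; apply: ler_sum => t _.
  rewrite normrM mulrCA ler_wpM2l //.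
  apply: le_trans (norm_monom_le t (y, 0) `|y| (norm_pcoord_slice_le y)) _.
  rewrite -(subnKC k_ge2) !exprD mulrA divfK ?expf_neq0 ?gt_eqF //.
  by rewrite ler_wpM2l ?exprn_ge0 // lerXn2r ?nnegrE ?normr_ge0 // ltW.
apply: le_trans (ler_norm_sum _ _ _) (le_trans tail_le _).
have -> : M / rho ^+ 2 * `|y| ^+ 2 = `|y| ^+ 2 / rho ^+ 2 * M by ring.
rewrite ler_wpM2l //; apply: le_trans (M_bound N).
rewrite -(big_mkord xpredT (fun k => \sum_(t : k.-tuple ('I_n + 'I_n)) `|cf k t| * rho ^+ k)).
rewrite (big_cat_nat (leq0n 2) N_ge2) /= lerDr.
by apply: sumr_ge0 => k _; apply: sumr_ge0 => t _; rewrite mulr_ge0 ?exprn_ge0 // ltW.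
Qed.

Lemma slice_remainder_le {M} (y : 'rV[K]_n) :
  (forall N, \sum_(k < N) \sum_(t : k.-tuple ('I_n + 'I_n)) `|cf k t| * rho ^+ k <= M) ->
  0 <= M -> `|y| <= rho ->
  `|F (x0 + y, a0) - homog_term (cf 0%N) (y, 0) - homog_term (cf 1%N) (y, 0)|
    <= M / rho ^+ 2 * `|y| ^+ 2.
Proof.
move=> M_bound M_ge0 y_le.
have y_lt i : `|pcoord (y, 0) i| < r.
  exact: le_lt_trans (norm_pcoord_slice_le y i) (le_lt_trans y_le rho_lt_r).
have [_] := F_series (y, 0) y_lt; rewrite /= addr0 => series_cvg.
apply: cvg_normr_le (cvgB (cvgB series_cvg (cvg_cst _)) (cvg_cst _)) _ _.
  by rewrite mulr_ge0 ?divr_ge0 ?exprn_ge0 // ltW.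
near=> N; have N_ge2 : (2 <= N)%N by near: N; exact: nbhs_infty_ge.
have tail_eq : \sum_(k < N) homog_term (cf k) (y, 0) - homog_term (cf 0%N) (y, 0)
    - homog_term (cf 1%N) (y, 0) = \sum_(2 <= k < N) homog_term (cf k) (y, 0).
  rewrite -(big_mkord xpredT (fun k => homog_term (cf k) (y, 0))).
  by rewrite (big_cat_nat (leq0n 2) N_ge2) /= !big_nat_recl // big_geq //; ring.
by rewrite !fctE tail_eq; exact: series_tail_le.
Unshelve. all: by end_near.
Qed.

Lemma differentiable_slice : differentiable (fun x => F (x, a0)) x0.
Proof.
have [M M_ge0 M_bound] := series_abs_bounded.
have rem_le y := slice_remainder_le y M_bound M_ge0.
have const_term h : homog_term (cf 0%N) h = homog_term (cf 0%N) (0, 0).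
  by apply: eq_bigr => t _; rewrite /monom !big_ord0.
have F_x0 : F (x0, a0) = homog_term (cf 0%N) (0, 0).
  have := rem_le 0; rewrite normr0 expr0n /= mulr0 addr0 => /(_ (ltW rho_gt0)).
  rewrite -[homog_term (cf 1%N) _]/(slice_linear _ 0) linear0 subr0.
  by rewrite normr_le0 subr_eq0 => /eqP.
have C_ge0 : 0 <= \sum_t `|cf 1%N t| + M / rho ^+ 2.
  by rewrite addr_ge0 ?sumr_ge0 ?divr_ge0 ?exprn_ge0 // ltW.
apply: (differentiable_quadratic_remainder _ _ (slice_linear (cf 1%N)) _ rho rho_gt0 C_ge0).
  move=> h; apply: le_trans (norm_slice_linear_le _ _) _.
  by rewrite ler_wpM2r // lerDl divr_ge0 ?exprn_ge0 // ltW.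
move=> h h_lt; rewrite F_x0 -(const_term (h, 0)) [h + x0]addrC.
apply: le_trans (rem_le h (ltW h_lt)) _.
by rewrite ler_wpM2r ?exprn_ge0 // lerDr sumr_ge0.
Qed.

End AnalyticSlice.

Lemma analytic_at_differentiable_slice {K : numFieldType} {n}
    (F : 'rV[K]_n * 'rV[K]_n -> K) (x0 a0 : 'rV[K]_n) :
  analytic_at F (x0, a0) -> differentiable (fun x => F (x, a0)) x0.
Proof. by move=> [r [r_gt0 [cf F_series]]]; exact: differentiable_slice F_series. Qed.

Lemma diff_eq_of_near_line {K : numFieldType} {V : normedModType K} (f : V -> K)
    (x v : V) (c : K) :
  differentiable f x -> (\forall s \near 0, f (s *: v + x) = f x + s * c) ->
  'd f x v = c.
Proof.
move=> f_diff f_line; rewrite -deriveE // /derive; apply: lim_near_cst => //.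
near=> h; have h_neq0 : h != 0 by near: h; exact: nbhs_dnbhs_neq.
have f_hv : f (h *: v + x) = f x + h * c by near: h; apply: nbhs_dnbhs.
by rewrite /= f_hv addrC addKr -[h * c]/(h *: c) scalerA mulVf // scale1r.
Unshelve. all: by end_near.
Qed.

Lemma cvg_line {K : numFieldType} {V : normedModType K} (v x : V) :
  (fun s : K => s *: v + x) @ 0 --> x.
Proof.
have := cvgD (cvgZl (a := v) (@cvg_id _ (nbhs (0 : K)))) (cvg_cst x).
by rewrite scale0r add0r; apply; exact: nbhs_filter.
Qed.

Lemma near_eq_of_isolated {T} {F : set_system T} {FF : Filter F}
    {Y : topologicalType} {P : Y -> Prop} {g : T -> Y} {y0 : Y} :
  (\forall y \near y0, P y -> y = y0) -> g @ F --> y0 ->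
  (\forall t \near F, P (g t)) -> \forall t \near F, g t = y0.
Proof.
move=> y0_isolated g_y0 P_g; near=> t.
have : P (g t) -> g t = y0 by near: t; exact: g_y0 _ y0_isolated.
by apply; near: t.
Unshelve. all: by end_near.
Qed.

Section EigenBranch.
Context {K : numFieldType} {n : nat} {c : 'I_n -> 'I_n -> 'I_n -> K}.
Context {U : set ('rV[K]_n * 'rV[K]_n)} {l : 'rV[K]_n * 'rV[K]_n -> K}.
Hypothesis U_open : open U.
Hypothesis l_analytic : locally_analytic U l.
Hypothesis l_eigen : forall p, U p -> pencil_eigenvalue c p.1 p.2 (l p).
Context {x a : 'rV[K]_n}.
Hypothesis U_xa : U (x, a).

Local Notation f := (fun y => l (y, a)).

Let f_diff : differentiable f x.
Proof. exact: analytic_at_differentiable_slice (l_analytic _ U_xa). Qed.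

Let f_line (v : 'rV[K]_n) : f (s *: v + x) @[s --> 0] --> f x.
Proof. exact: cvg_comp (cvg_line v x) (differentiable_continuous f_diff). Qed.

Let eigen_line (v : 'rV[K]_n) :
  \forall s \near 0, pencil_eigenvalue c (s *: v + x) a (f (s *: v + x)).
Proof.
have line_cvg : (s *: v + x, a) @[s --> 0] --> (x, a).
  exact: cvg_pair (cvg_line v x) (cvg_cst a).
exact: filterS (fun s => l_eigen (s *: v + x, a)) (line_cvg _ (U_open _ U_xa)).
Qed.

Lemma diff_eigen_branch_along_a : 'd f x a = 1.
Proof.
apply: diff_eq_of_near_line f_diff _.
have g_cvg : f (s *: a + x) - s @[s --> 0] --> f x.
  by rewrite -[f x]subr0; exact: cvgB (f_line a) cvg_id.
near=> s.
have g_eq : f (s *: a + x) - s = f x.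
  near: s; apply: near_eq_of_isolated (pencil_eigenvalue_isolated c x a (f x)) g_cvg _.
  near=> s.
  by apply: pencil_eigenvalue_shift; rewrite addrC; near: s; exact: eigen_line.
by rewrite -g_eq mulr1 subrK.
Unshelve. all: by end_near.
Qed.

Lemma diff_eigen_branch_euler : 'd f x x = f x.
Proof.
apply: diff_eq_of_near_line f_diff _.
have one_cvg : 1 + s @[s --> (0 : K)] --> (1 : K).
  by rewrite -[X in _ --> X]addr0; exact: cvgD (cvg_cst _) cvg_id.
have unit_near : \forall s \near (0 : K), 1 + s != 0.
  near=> s; have : `|1 - (1 + s)| < 1 by near: s; exact: cvgr_dist_lt _ _ one_cvg _ ltr01.
  by apply: contraTneq => ->; rewrite subr0 normr1 ltxx.
have g_cvg : f (s *: x + x) / (1 + s) @[s --> 0] --> f x.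
  rewrite -[f x]mulr1 -[X in _ * X]invr1.
  exact: cvgM (f_line x) (cvgV (oner_neq0 K) one_cvg).
near=> s.
have s_unit : 1 + s != 0 by near: s.
have g_eq : f (s *: x + x) / (1 + s) = f x.
  near: s; apply: near_eq_of_isolated (pencil_eigenvalue_isolated c x a (f x)) g_cvg _.
  near=> s; apply: pencil_eigenvalue_scale; first by near: s.
  by rewrite scalerDl scale1r addrC; near: s; exact: eigen_line.
by rewrite -g_eq -[LHS](divfK s_unit); ring.
Unshelve. all: by end_near.
Qed.

End EigenBranch.

Lemma dual_pairing_wedge2 {K : numFieldType} {n} (u v y z : 'rV[K]_n) :
  dual_pairing u y * dual_pairing v z - dual_pairing u z * dual_pairing v y
  = \sum_i \sum_j wedge2 u v i j * (y 0 i * z 0 j).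
Proof.
rewrite /dual_pairing !big_distrlr /= [in X in _ - X]exchange_big -sumrB.
apply: eq_bigr => i _; rewrite -sumrB; apply: eq_bigr => j _.
by rewrite mxE; ring.
Qed.

Lemma wedge2_eq0_pairing {K : numFieldType} {n} {u v : 'rV[K]_n} (y z : 'rV[K]_n) :
  wedge2 u v = 0 ->
  dual_pairing u y * dual_pairing v z = dual_pairing u z * dual_pairing v y.
Proof.
move=> uv0; apply/eqP; rewrite -subr_eq0 dual_pairing_wedge2 uv0.
by apply/eqP/big1 => i _; apply: big1 => j _; rewrite mxE mul0r.
Qed.

Lemma dual_pairing_row_linear {K : numFieldType} {n} (L : {linear 'rV[K]_n -> K})
    (w : 'rV[K]_n) :
  dual_pairing (\row_k L (delta_mx 0 k)) w = L w.
Proof.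
rewrite /dual_pairing [in RHS](row_sum_delta w) raddf_sum.
by apply: eq_bigr => k _; rewrite mxE mulrC; exact: (esym (linearZZ L (w 0 k) (delta_mx 0 k))).
Qed.

Lemma dual_pairing_dx {R : realType} {n}
    (F : 'rV[cplx R]_n * 'rV[cplx R]_n -> cplx R) (x a w : 'rV[cplx R]_n) :
  dual_pairing (dx F (x, a)) w = 'd (fun y => F (y, a)) x w.
Proof. exact: (dual_pairing_row_linear ('d (fun y => F (y, a)) x) w). Qed.

Lemma wedge2_neq0_of_pairing {K : numFieldType} {n} {u v : 'rV[K]_n} (y z : 'rV[K]_n)
    {l1 l2 : K} :
  dual_pairing u y = 1 -> dual_pairing u z = l1 ->
  dual_pairing v y = 1 -> dual_pairing v z = l2 ->
  l1 != l2 -> wedge2 u v != 0.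
Proof.
move=> uy uz vy vz; apply: contra_neq => /(wedge2_eq0_pairing y z).
by rewrite uy uz vy vz mul1r mulr1.
Qed.

Theorem lemma4 (R : realType) (n : nat) (c : 'I_n -> 'I_n -> 'I_n -> cplx R)
  (Hlie : is_lie_structure c)
  (U : set ('rV[cplx R]_n * 'rV[cplx R]_n)) (HU : open U)
  (l1 l2 : 'rV[cplx R]_n * 'rV[cplx R]_n -> cplx R)
  (Hl1 : locally_analytic U l1) (Hl2 : locally_analytic U l2)
  (Heig : forall p, U p ->
     [/\ pencil_eigenvalue c p.1 p.2 (l1 p),
         pencil_eigenvalue c p.1 p.2 (l2 p) & l1 p != l2 p]) :
  exists V : set ('rV[cplx R]_n * 'rV[cplx R]_n),
    [/\ open V, V `<=` U,
        (forall O, open O -> O `&` U !=set0 -> O `&` V !=set0) &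
        (forall p, V p -> wedge2 (dx l1 p) (dx l2 p) != 0)].
Proof.
exists U; split=> // -[x a] U_xa.
have eig1 p : U p -> pencil_eigenvalue c p.1 p.2 (l1 p) by case/Heig.
have eig2 p : U p -> pencil_eigenvalue c p.1 p.2 (l2 p) by case/Heig.
have [_ _ l12] := Heig _ U_xa.
apply: (wedge2_neq0_of_pairing a x _ _ _ _ l12).
- exact: etrans (dual_pairing_dx l1 x a a) (diff_eigen_branch_along_a HU Hl1 eig1 U_xa).
- exact: etrans (dual_pairing_dx l1 x a x) (diff_eigen_branch_euler HU Hl1 eig1 U_xa).
- exact: etrans (dual_pairing_dx l2 x a a) (diff_eigen_branch_along_a HU Hl2 eig2 U_xa).
- exact: etrans (dual_pairing_dx l2 x a x) (diff_eigen_branch_euler HU Hl2 eig2 U_xa).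
Qed.
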